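(* Let $\mu>0$. For every $n\in\mathbb{N}$ with $n>1$ and every $f\in C([0,1])$, $$\|\mathscr{L}_n^K f-f\|_\infty\le \omega\!\left(f_\mu,\tfrac{1}{\sqrt{n+1}}\right)\ln(2+\mu)\left\{1+\frac{1}{2\sqrt{n+1}}+\sqrt2\right\}+\omega(f_\mu,\gamma_n)\ln(2+\mu),$$ where $\gamma_n:=\max_{x\in[0,1]}|a_{n+1}(x)-x|$.
   Context: Fix $\mu>0$. Let $\ln_\mu(x):=\ln(1+\mu+x)$ for $x\in[0,1]$, and for $f:[0,1]\to\mathbb{R}$ let $f_\mu(x):=f(x)/\ln_\mu(x)$. Let $p_{n,k}(y):=\binom{n}{k}y^k(1-y)^{n-k}$ and $a_{n+1}(x):=\dfrac{\ln\left(1+\frac{x}{(n+1)(1+\mu)}\right)}{\ln\left(1+\frac{1}{(n+1)(1+\mu)}\right)}$, $x\in[0,1]$. For $n\in\mathbb{N}$ define $\mathscr{L}_n^K f(x):=\ln_\mu(x)\sum_{k=0}^n p_{n,k}(a_{n+1}(x))\,(n+1)\int_{k/(n+1)}^{(k+1)/(n+1)} f_\mu(t)\,dt$, $x\in[0,1]$. For $g\in C([0,1])$ and $\delta>0$, $\omega(g,\delta):=\sup\{|g(t)-g(x)|: x,t\in[0,1],\ |t-x|\le\delta\}$; $\|\cdot\|_\infty$ is the sup norm on $[0,1]$. *)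

From Stdlib Require Import Reals.
From Coquelicot Require Import Coquelicot.
Open Scope R_scope.

Definition ln_mu (mu x : R) : R := ln (1 + mu + x).

Definition f_mu (mu : R) (f : R -> R) (x : R) : R := f x / ln_mu mu x.

Definition p_nk (n k : nat) (y : R) : R := Binomial.C n k * y ^ k * (1 - y) ^ (n - k).

Definition a_np1 (mu : R) (n : nat) (x : R) : R :=
  ln (1 + x / (INR (n + 1) * (1 + mu))) / ln (1 + 1 / (INR (n + 1) * (1 + mu))).

Definition LK (mu : R) (n : nat) (f : R -> R) (x : R) : R :=
  ln_mu mu x *
  sum_f_R0 (fun k => p_nk n k (a_np1 mu n x) *
                     (INR (n + 1) * RInt (f_mu mu f) (INR k / INR (n + 1))
                                                     (INR (k + 1) / INR (n + 1))))
           n.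

Definition I01 (x : R) : Prop := 0 <= x <= 1.

Definition omega (g : R -> R) (delta : R) : R :=
  real (Lub_Rbar (fun r => exists x t, I01 x /\ I01 t /\ Rabs (t - x) <= delta /\
                                       r = Rabs (g t - g x))).

(* gamma_n = max_{x in [0,1]} |a_{n+1}(x) - x|  (a sup of a continuous function
   on a compact set, hence attained) *)
Definition gamma_n (mu : R) (n : nat) : R :=
  real (Lub_Rbar (fun r => exists x, I01 x /\ r = Rabs (a_np1 mu n x - x))).

Definition cont01 (f : R -> R) : Prop :=
  forall x, I01 x -> filterlim f (within I01 (locally x)) (locally (f x)).

(* With g = f_mu and y = a_{n+1}(x), the operator is L_n^K f (x) = ln_mu(x) K_n g (y),
   where K_n is the classical Kantorovich operator, while f(x) = ln_mu(x) g(x).  Since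
   0 < ln_mu <= ln(2 + mu) on [0,1], it suffices to bound |K_n g (y) - g(y)| and
   |g(y) - g(x)| <= omega(g, gamma_n).  Each cell average of g differs from g(y) by at most
   omega(g, d) (1 + (t - y)^2 / d^2) for some t in the cell, and the second moments of the
   Bernstein basis turn the weighted sum of these bounds, for d = 1/sqrt(n+1), into
   3/2 omega(g, d); this constant is smaller than the stated 1 + 1/(2 sqrt(n+1)) + sqrt 2. *)

From Stdlib Require Import Reals Lra Lia Psatz.
From Coquelicot Require Import Coquelicot.
Open Scope R_scope.

Lemma Binomial_C_absorption (m j : nat) : (j <= m)%nat ->
  INR (S j) * Binomial.C (S m) (S j) = INR (S m) * Binomial.C m j.
Proof.
  intros Hj. unfold Binomial.C.
  replace (S m - S j)%nat with (m - j)%nat by lia.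
  change (Factorial.fact (S m)) with (S m * Factorial.fact m)%nat.
  change (Factorial.fact (S j)) with (S j * Factorial.fact j)%nat.
  rewrite !mult_INR.
  assert (INR (S j) <> 0) by (apply not_0_INR; lia).
  field; repeat split; auto using INR_fact_neq_0.
Qed.

Lemma p_nk_ge0 (n k : nat) (y : R) : 0 <= y <= 1 -> 0 <= p_nk n k y.
Proof.
  intros Hy. unfold p_nk, Binomial.C.
  repeat apply Rmult_le_pos; try apply pow_le; try lra.
  - apply pos_INR.
  - apply Rlt_le, Rinv_0_lt_compat, Rmult_lt_0_compat; apply INR_fact_lt_0.
Qed.

Lemma sum_p_nk (n : nat) (y : R) : sum_f_R0 (fun k => p_nk n k y) n = 1.
Proof.
  unfold p_nk. rewrite <- binomial. replace (y + (1 - y)) with 1 by ring. apply pow1.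
Qed.

Lemma sum_INR_mul_p_nk_succ (m : nat) (h : nat -> R) (y : R) :
  sum_f_R0 (fun k => INR k * h k * p_nk (S m) k y) (S m) =
  INR (S m) * y * sum_f_R0 (fun j => h (S j) * p_nk m j y) m.
Proof.
  rewrite decomp_sum by lia. simpl pred.
  rewrite !Rmult_0_l, Rplus_0_l, scal_sum.
  apply sum_eq. intros j Hj. unfold p_nk.
  replace (S m - S j)%nat with (m - j)%nat by lia.
  transitivity ((INR (S j) * Binomial.C (S m) (S j)) * h (S j) * y ^ S j * (1 - y) ^ (m - j));
    [ring|].
  rewrite Binomial_C_absorption by exact Hj. simpl. ring.
Qed.

Lemma sum_INR_p_nk (n : nat) (y : R) :
  sum_f_R0 (fun k => INR k * p_nk n k y) n = INR n * y.
Proof.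
  destruct n as [|m]; [simpl; ring|].
  transitivity (sum_f_R0 (fun k => INR k * 1 * p_nk (S m) k y) (S m));
    [apply sum_eq; intros; ring|].
  rewrite sum_INR_mul_p_nk_succ.
  rewrite (sum_eq _ (fun j => p_nk m j y)) by (intros; ring).
  rewrite sum_p_nk. ring.
Qed.

Lemma sum_INR_falling2_p_nk (n : nat) (y : R) :
  sum_f_R0 (fun k => INR k * (INR k - 1) * p_nk n k y) n = INR n * (INR n - 1) * y ^ 2.
Proof.
  destruct n as [|m]; [simpl; ring|].
  rewrite sum_INR_mul_p_nk_succ.
  rewrite (sum_eq _ (fun j => INR j * p_nk m j y)) by (intros; rewrite S_INR; ring).
  rewrite sum_INR_p_nk, S_INR. ring.
Qed.

Lemma sum_sq_dist_p_nk (n : nat) (y c : R) :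
  sum_f_R0 (fun k => p_nk n k y * (INR k - c) ^ 2) n =
  INR n * y * (1 - y) + (INR n * y - c) ^ 2.
Proof.
  rewrite (sum_eq _ (fun k => INR k * (INR k - 1) * p_nk n k y
                              + INR k * p_nk n k y * (1 - 2 * c) + p_nk n k y * c ^ 2))
    by (intros; ring).
  rewrite !plus_sum, <- !scal_sum, sum_INR_falling2_p_nk, sum_INR_p_nk, sum_p_nk. ring.
Qed.

Lemma sum_p_nk_cell_sq_dist_le (n : nat) (y : R) : (1 <= n)%nat -> 0 <= y <= 1 ->
  sum_f_R0 (fun k => p_nk n k y *
     ((INR k / INR (n + 1) - y) ^ 2 + (INR (k + 1) / INR (n + 1) - y) ^ 2)) n
  <= 1 / (2 * INR (n + 1)).
Proof.
  intros Hn Hy.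
  assert (Hn1 : 1 <= INR n) by (apply (le_INR 1); lia).
  set (N := INR (n + 1)).
  assert (HN : N = INR n + 1) by (unfold N; rewrite plus_INR; simpl; ring).
  rewrite (sum_eq _ (fun k => p_nk n k y * (INR k - N * y) ^ 2 * / N ^ 2
                              + p_nk n k y * (INR k - (N * y - 1)) ^ 2 * / N ^ 2)).
  2: { intros k _. rewrite plus_INR. fold N. simpl INR. field. lra. }
  rewrite plus_sum, <- !scal_sum, !sum_sq_dist_p_nk.
  replace (/ N ^ 2 * (INR n * y * (1 - y) + (INR n * y - N * y) ^ 2) +
           / N ^ 2 * (INR n * y * (1 - y) + (INR n * y - (N * y - 1)) ^ 2))
    with ((2 * INR n * y * (1 - y) + y ^ 2 + (1 - y) ^ 2) / N ^ 2)
    by (rewrite HN; field; lra).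
  apply Rmult_le_reg_r with (2 * N ^ 2); [nra|].
  replace (1 / (2 * N) * (2 * N ^ 2)) with N by (field; lra).
  replace ((2 * INR n * y * (1 - y) + y ^ 2 + (1 - y) ^ 2) / N ^ 2 * (2 * N ^ 2))
    with (2 * (2 * INR n * y * (1 - y) + y ^ 2 + (1 - y) ^ 2)) by (field; lra).
  (* N minus the left-hand side is (n - 1) (1 - 2 y)^2 *)
  assert (0 <= (INR n - 1) * (1 - 2 * y) ^ 2) by (apply Rmult_le_pos; [lra | apply pow2_ge_0]).
  nra.
Qed.

Lemma le_real_Lub_Rbar (E : R -> Prop) (r M : R) :
  E r -> (forall s, E s -> s <= M) -> r <= real (Lub_Rbar E).
Proof.
  intros Hr HM. destruct (Lub_Rbar_correct E) as [Hub Hlub].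
  assert (Hle : Rbar_le (Lub_Rbar E) M) by (apply Hlub; intros s Hs; apply HM, Hs).
  specialize (Hub r Hr).
  destruct (Lub_Rbar E); simpl in *; easy.
Qed.

Section ModulusOfContinuity.

Variable G : R -> R.
Variable M : R.
Hypothesis G_bounded : forall t, I01 t -> Rabs (G t) <= M.

Lemma omega_spec d s t : I01 s -> I01 t -> Rabs (t - s) <= d ->
  Rabs (G t - G s) <= omega G d.
Proof.
  intros Hs Ht Hd. apply le_real_Lub_Rbar with (M := M + M).
  - exists s, t. auto.
  - intros r [x [u [Hx [Hu [_ ->]]]]].
    assert (Bx := G_bounded x Hx). assert (Bu := G_bounded u Hu).
    unfold Rabs in *. repeat destruct Rcase_abs; lra.
Qed.

Lemma omega_ge0 d : 0 <= d -> 0 <= omega G d.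
Proof.
  intros Hd. apply Rle_trans with (Rabs (G 0 - G 0)); [apply Rabs_pos|].
  apply omega_spec; unfold I01; try lra. rewrite Rminus_0_r, Rabs_R0. exact Hd.
Qed.

Lemma omega_spec_mul d (Hd : 0 < d) m s t : I01 s -> I01 t ->
  Rabs (t - s) <= (INR m + 1) * d -> Rabs (G t - G s) <= (INR m + 1) * omega G d.
Proof.
  assert (Hw := omega_ge0 d ltac:(lra)).
  revert s t. induction m as [|m IH]; intros s t Hs Ht Hts.
  - simpl in *. rewrite Rplus_0_l, Rmult_1_l in *. apply omega_spec; auto.
  - rewrite S_INR in *.
    destruct (Rle_dec (Rabs (t - s)) ((INR m + 1) * d)) as [Hle|Hgt].
    + assert (IH' := IH s t Hs Ht Hle). lra.
    + (* u is t moved by d towards s; it stays in [0,1] since |t - s| > d *)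
      set (u := if Rle_dec s t then t - d else t + d).
      assert (Hu : I01 u /\ Rabs (u - s) <= (INR m + 1) * d /\ Rabs (t - u) <= d).
      { unfold u. destruct Hs, Ht. assert (0 <= INR m) by apply pos_INR.
        destruct Rle_dec; unfold I01; unfold Rabs in *; repeat destruct Rcase_abs; nra. }
      destruct Hu as [Hu [Hus Htu]].
      assert (IH' := IH s u Hs Hu Hus). assert (Step := omega_spec d u t Hu Ht Htu).
      replace (G t - G s) with ((G t - G u) + (G u - G s)) by ring.
      eapply Rle_trans; [apply Rabs_triang|]. lra.
Qed.

Lemma omega_spec_sq d (Hd : 0 < d) s t : I01 s -> I01 t ->
  Rabs (G t - G s) <= omega G d * (1 + (t - s) ^ 2 / d ^ 2).
Proof.
  intros Hs Ht.
  assert (Hw := omega_ge0 d ltac:(lra)).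
  set (q := Rabs (t - s) / d).
  assert (Hq : 0 <= q) by (apply Rdiv_le_0_compat; [apply Rabs_pos|lra]).
  destruct (nfloor_ex q Hq) as [m [Hmq Hqm]].
  assert (Hts : Rabs (t - s) <= (INR m + 1) * d).
  { apply Rlt_le, Rmult_lt_reg_r with (/ d); [apply Rinv_0_lt_compat; lra|].
    rewrite Rmult_assoc, Rinv_r, Rmult_1_r by lra. exact Hqm. }
  eapply Rle_trans; [exact (omega_spec_mul d Hd m s t Hs Ht Hts)|].
  rewrite (Rmult_comm (omega G d)). apply Rmult_le_compat_r; [exact Hw|].
  replace ((t - s) ^ 2 / d ^ 2) with (q ^ 2)
    by (unfold q; rewrite <- (pow2_abs (t - s)); field; lra).
  (* m + 1 <= 1 + q^2, since m = 0 or 1 <= m <= q *)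
  destruct m as [|m]; [simpl; nra|].
  rewrite S_INR in *. assert (0 <= INR m) by apply pos_INR. nra.
Qed.

End ModulusOfContinuity.

Definition clamp01 (t : R) : R := Rmax 0 (Rmin 1 t).

Lemma clamp01_I01 t : I01 (clamp01 t).
Proof. unfold clamp01, I01, Rmax, Rmin. repeat destruct Rle_dec; lra. Qed.

Lemma clamp01_id t : I01 t -> clamp01 t = t.
Proof. unfold clamp01, I01, Rmax, Rmin. intros. repeat destruct Rle_dec; lra. Qed.

Lemma Rabs_clamp01_sub_le s t : Rabs (clamp01 t - clamp01 s) <= Rabs (t - s).
Proof.
  unfold clamp01, Rmax, Rmin.
  repeat destruct Rle_dec; unfold Rabs; repeat destruct Rcase_abs; lra.
Qed.

Lemma filterlim_clamp01 z : filterlim clamp01 (locally z) (within I01 (locally (clamp01 z))).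
Proof.
  intros P [eps Heps]. exists eps. intros t Ht. apply Heps; [|apply clamp01_I01].
  exact (Rle_lt_trans _ _ _ (Rabs_clamp01_sub_le z t) Ht).
Qed.

(* Extending g by constants outside [0,1] gives a function continuous on all of R, to
   which the Stdlib/Coquelicot theorems on segments (stated for continuity in R) apply. *)
Lemma continuous_comp_clamp01 g : cont01 g -> forall z, continuous (fun t => g (clamp01 t)) z.
Proof.
  intros Hg z. eapply filterlim_comp; [apply filterlim_clamp01|apply Hg, clamp01_I01].
Qed.

Lemma cont01_bounded g : cont01 g -> exists M, forall t, I01 t -> Rabs (g t) <= M.
Proof.
  intros Hg. set (h t := g (clamp01 t)).
  assert (Hc : forall c, 0 <= c <= 1 -> continuity_pt h c)
    by (intros c _; apply continuity_pt_filterlim, continuous_comp_clamp01, Hg).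
  destruct (continuity_ab_maj h 0 1 ltac:(lra) Hc) as [a [Ha _]].
  destruct (continuity_ab_min h 0 1 ltac:(lra) Hc) as [b [Hb _]].
  exists (Rabs (h a) + Rabs (h b)). intros t Ht.
  specialize (Ha t Ht). specialize (Hb t Ht).
  unfold h in *. rewrite (clamp01_id t Ht) in Ha, Hb.
  unfold Rabs. repeat destruct Rcase_abs; lra.
Qed.

Lemma cont01_ex_RInt g a b : cont01 g -> 0 <= a -> a <= b -> b <= 1 -> ex_RInt g a b.
Proof.
  intros Hg Ha Hab Hb. apply ex_RInt_ext with (fun t => g (clamp01 t)).
  - intros t Ht. rewrite Rmin_left, Rmax_right in Ht by lra.
    rewrite clamp01_id; [reflexivity|unfold I01; lra].
  - apply (@ex_RInt_continuous R_CompleteNormedModule).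
    intros z _. apply continuous_comp_clamp01, Hg.
Qed.

Lemma ln_mu_pos mu x : 0 < mu -> I01 x -> 0 < ln_mu mu x.
Proof. intros Hmu [H0 H1]. unfold ln_mu. rewrite <- ln_1. apply ln_increasing; lra. Qed.

Lemma ln_mu_le mu x : 0 < mu -> I01 x -> ln_mu mu x <= ln (2 + mu).
Proof. intros Hmu [H0 H1]. unfold ln_mu. apply ln_le; lra. Qed.

Lemma cont01_f_mu mu f : 0 < mu -> cont01 f -> cont01 (f_mu mu f).
Proof.
  intros Hmu Hf x Hx. unfold f_mu.
  assert (Hinv : continuous (fun t => / ln_mu mu t) x).
  { apply (@ex_derive_continuous R_AbsRing R_NormedModule). unfold ln_mu. auto_derive.
    destruct Hx. split; [lra|]. split; [|exact I].
    apply Rgt_not_eq, (ln_mu_pos mu x Hmu); split; lra. }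
  apply (filterlim_comp_2 (F := within I01 (locally x)) (G := locally (f x))
           (H := locally (/ ln_mu mu x)) f (fun t => / ln_mu mu t) Rmult).
  - exact (Hf x Hx).
  - exact (filterlim_filter_le_1 _ (filter_le_within I01) Hinv).
  - exact (@filterlim_mult R_AbsRing (f x) (/ ln_mu mu x)).
Qed.

Lemma sq_dist_le_endpoints a b s t : a <= t <= b ->
  (t - s) ^ 2 <= (a - s) ^ 2 + (b - s) ^ 2.
Proof.
  intros Ht. destruct (Rle_dec s t).
  - assert (0 <= (a - s) ^ 2) by apply pow2_ge_0. nra.
  - assert (0 <= (b - s) ^ 2) by apply pow2_ge_0. nra.
Qed.

Lemma Rabs_RInt_sub_le g a b c B : a <= b -> ex_RInt g a b ->
  (forall t, a <= t <= b -> Rabs (g t - c) <= B) ->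
  Rabs (RInt g a b - (b - a) * c) <= (b - a) * B.
Proof.
  intros Hab Hg HB.
  assert (Hc : ex_RInt (fun _ => c) a b) by apply ex_RInt_const.
  replace ((b - a) * c) with (RInt (fun _ => c) a b) by (rewrite RInt_const; reflexivity).
  assert (E : RInt (fun t => g t - c) a b = RInt g a b - RInt (fun _ => c) a b)
    by exact (@RInt_minus R_CompleteNormedModule g (fun _ => c) a b Hg Hc).
  rewrite <- E.
  apply abs_RInt_le_const; auto.
  exact (@ex_RInt_minus R_NormedModule _ _ a b Hg Hc).
Qed.

Definition cell_mean (g : R -> R) (n k : nat) : R :=
  INR (n + 1) * RInt g (INR k / INR (n + 1)) (INR (k + 1) / INR (n + 1)).

Definition kantorovich (n : nat) (g : R -> R) (y : R) : R :=
  sum_f_R0 (fun k => p_nk n k y * cell_mean g n k) n.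

Lemma LK_kantorovich mu n f x :
  LK mu n f x = ln_mu mu x * kantorovich n (f_mu mu f) (a_np1 mu n x).
Proof. reflexivity. Qed.

Lemma Rabs_cell_mean_sub_le g n k c B : cont01 g -> (k <= n)%nat ->
  (forall t, I01 t -> INR k / INR (n + 1) <= t <= INR (k + 1) / INR (n + 1) ->
     Rabs (g t - c) <= B) ->
  Rabs (cell_mean g n k - c) <= B.
Proof.
  intros Hg Hkn HB. unfold cell_mean.
  set (N := INR (n + 1)).
  assert (HN : N = INR n + 1) by (unfold N; rewrite plus_INR; simpl; ring).
  assert (Hkn' : INR k <= INR n) by (apply le_INR, Hkn).
  assert (Hk0 := pos_INR k).
  assert (HNp : 0 < N) by lra.
  assert (Hcell : INR (k + 1) / N - INR k / N = / N)
    by (rewrite plus_INR; simpl INR; field; lra).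
  assert (Hk1 : INR (k + 1) / N <= 1)
    by (apply (Rdiv_le_1 (INR (k + 1)) N); [lra | rewrite plus_INR; simpl INR; lra]).
  assert (Hle : INR k / N <= INR (k + 1) / N).
  { assert (0 < / N) by (apply Rinv_0_lt_compat; lra). lra. }
  assert (Hk0N : 0 <= INR k / N) by (apply Rdiv_le_0_compat; lra).
  assert (Hint := Rabs_RInt_sub_le g _ _ c B Hle (cont01_ex_RInt g _ _ Hg Hk0N Hle Hk1)).
  specialize (Hint (fun t Ht => HB t ltac:(split; lra) Ht)).
  rewrite Hcell in Hint.
  replace (N * RInt g (INR k / N) (INR (k + 1) / N) - c)
    with (N * (RInt g (INR k / N) (INR (k + 1) / N) - / N * c)) by (field; lra).
  rewrite Rabs_mult, Rabs_pos_eq by lra.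
  apply Rmult_le_compat_l with (r := N) in Hint; [|lra].
  replace (N * (/ N * B)) with B in Hint by (field; lra).
  exact Hint.
Qed.

Lemma Rabs_sum_p_nk_sub_le n y (c : nat -> R) v w : (1 <= n)%nat -> I01 y -> 0 <= w ->
  (forall k, (k <= n)%nat -> Rabs (c k - v) <=
     w * (1 + INR (n + 1) * ((INR k / INR (n + 1) - y) ^ 2
                             + (INR (k + 1) / INR (n + 1) - y) ^ 2))) ->
  Rabs (sum_f_R0 (fun k => p_nk n k y * c k) n - v) <= 3 / 2 * w.
Proof.
  intros Hn Hy Hw Hc.
  set (N := INR (n + 1)) in *.
  assert (HNp : 0 < N) by (apply lt_0_INR; lia).
  set (Q k := (INR k / N - y) ^ 2 + (INR (k + 1) / N - y) ^ 2) in *.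
  replace (sum_f_R0 (fun k => p_nk n k y * c k) n - v)
    with (sum_f_R0 (fun k => p_nk n k y * (c k - v)) n).
  2: { rewrite (sum_eq _ (fun k => p_nk n k y * c k - p_nk n k y * v)) by (intros; ring).
       rewrite minus_sum, <- scal_sum, sum_p_nk. ring. }
  eapply Rle_trans; [apply sum_f_R0_triangle|].
  eapply Rle_trans.
  { apply (sum_Rle _ (fun k => p_nk n k y * w + p_nk n k y * Q k * (w * N))).
    intros k Hkn. assert (Hp := p_nk_ge0 n k y Hy).
    rewrite Rabs_mult, Rabs_pos_eq by exact Hp.
    replace (p_nk n k y * w + p_nk n k y * Q k * (w * N))
      with (p_nk n k y * (w * (1 + N * Q k))) by ring.
    apply Rmult_le_compat_l; [exact Hp | apply Hc, Hkn]. }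
  rewrite plus_sum, <- !scal_sum, sum_p_nk.
  assert (HQ : sum_f_R0 (fun k => p_nk n k y * Q k) n <= 1 / (2 * N))
    by exact (sum_p_nk_cell_sq_dist_le n y Hn Hy).
  assert (w * N * (1 / (2 * N)) = w / 2) by (field; lra).
  assert (0 <= w * N) by (apply Rmult_le_pos; lra).
  nra.
Qed.

Lemma Rabs_kantorovich_sub_le n g y : (1 <= n)%nat -> cont01 g -> I01 y ->
  Rabs (kantorovich n g y - g y) <= 3 / 2 * omega g (1 / sqrt (INR (n + 1))).
Proof.
  intros Hn Hg Hy.
  destruct (cont01_bounded g Hg) as [M HM].
  set (N := INR (n + 1)).
  assert (HNp : 0 < N) by (apply lt_0_INR; lia).
  set (d := 1 / sqrt N).
  assert (Hd : 0 < d) by (apply Rdiv_lt_0_compat; [lra | apply sqrt_lt_R0, HNp]).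
  assert (Hd2 : d ^ 2 = / N)
    by (unfold d; rewrite <- Rsqr_pow2, Rsqr_div', Rsqr_1, Rsqr_sqrt by lra; field; lra).
  assert (Hw : 0 <= omega g d) by (apply (omega_ge0 g M HM); lra).
  apply Rabs_sum_p_nk_sub_le; auto. fold N.
  intros k Hkn. apply Rabs_cell_mean_sub_le; auto.
  intros t HtI Ht.
  eapply Rle_trans; [apply (omega_spec_sq g M HM d Hd y t Hy HtI)|].
  apply Rmult_le_compat_l; [exact Hw|].
  rewrite Hd2. replace ((t - y) ^ 2 / / N) with (N * (t - y) ^ 2) by (field; lra).
  apply Rplus_le_compat_l, Rmult_le_compat_l; [lra|].
  apply sq_dist_le_endpoints, Ht.
Qed.

Lemma a_np1_I01 mu n x : 0 < mu -> I01 x -> I01 (a_np1 mu n x).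
Proof.
  intros Hmu [Hx0 Hx1]. unfold a_np1.
  set (D := INR (n + 1) * (1 + mu)).
  assert (HD : 0 < D) by (apply Rmult_lt_0_compat; [apply lt_0_INR; lia | lra]).
  assert (HxD : 0 <= x / D <= 1 / D).
  { split; apply Rmult_le_compat_r || apply Rdiv_le_0_compat; try lra.
    apply Rlt_le, Rinv_0_lt_compat, HD. }
  assert (Hnum0 : 0 <= ln (1 + x / D)) by (rewrite <- ln_1; apply ln_le; lra).
  assert (Hnum1 : ln (1 + x / D) <= ln (1 + 1 / D)) by (apply ln_le; lra).
  assert (Hden : 0 < ln (1 + 1 / D)).
  { rewrite <- ln_1. apply ln_increasing; [lra|].
    assert (0 < 1 / D) by (apply Rdiv_lt_0_compat; lra). lra. }
  split; [apply Rdiv_le_0_compat; lra | apply (Rdiv_le_1 _ _ Hden); exact Hnum1].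
Qed.

Lemma Rabs_a_np1_sub_le_gamma_n mu n x : 0 < mu -> I01 x ->
  Rabs (a_np1 mu n x - x) <= gamma_n mu n.
Proof.
  intros Hmu Hx. apply le_real_Lub_Rbar with (M := 1); [exists x; auto|].
  intros s [z [Hz ->]]. destruct (a_np1_I01 mu n z Hmu Hz), Hz.
  unfold Rabs. destruct Rcase_abs; lra.
Qed.

Lemma Rabs_LK_sub_le mu n f x : 0 < mu -> (1 <= n)%nat -> cont01 f -> I01 x ->
  Rabs (LK mu n f x - f x) <=
    ln (2 + mu) * (3 / 2 * omega (f_mu mu f) (1 / sqrt (INR (n + 1)))
                   + omega (f_mu mu f) (gamma_n mu n)).
Proof.
  intros Hmu Hn Hf Hx.
  set (g := f_mu mu f). set (y := a_np1 mu n x).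
  assert (Hg : cont01 g) by exact (cont01_f_mu mu f Hmu Hf).
  assert (Hy : I01 y) by exact (a_np1_I01 mu n x Hmu Hx).
  destruct (cont01_bounded g Hg) as [M HM].
  assert (Hkant := Rabs_kantorovich_sub_le n g y Hn Hg Hy).
  assert (Hshift : Rabs (g y - g x) <= omega g (gamma_n mu n))
    by (apply (omega_spec g M HM); auto; apply Rabs_a_np1_sub_le_gamma_n; auto).
  assert (HL0 := ln_mu_pos mu x Hmu Hx). assert (HL1 := ln_mu_le mu x Hmu Hx).
  assert (Ef : f x = ln_mu mu x * g x) by (unfold g, f_mu; field; lra).
  rewrite LK_kantorovich, Ef; fold g y.
  replace (ln_mu mu x * kantorovich n g y - ln_mu mu x * g x)
    with (ln_mu mu x * ((kantorovich n g y - g y) + (g y - g x))) by ring.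
  rewrite Rabs_mult, (Rabs_pos_eq (ln_mu mu x)) by lra.
  assert (HS := Rabs_pos ((kantorovich n g y - g y) + (g y - g x))).
  assert (Htri := Rabs_triang (kantorovich n g y - g y) (g y - g x)).
  apply Rle_trans with (ln (2 + mu) * Rabs ((kantorovich n g y - g y) + (g y - g x)));
    [apply Rmult_le_compat_r | apply Rmult_le_compat_l]; lra.
Qed.

Theorem theorem6p1 (mu : R) (hmu : 0 < mu) (n : nat) (hn : (1 < n)%nat)
  (f : R -> R) (hf : cont01 f) :
  forall x, I01 x ->
    Rabs (LK mu n f x - f x) <=
      omega (f_mu mu f) (1 / sqrt (INR (n + 1))) * ln (2 + mu) *
        (1 + 1 / (2 * sqrt (INR (n + 1))) + sqrt 2)
      + omega (f_mu mu f) (gamma_n mu n) * ln (2 + mu).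
Proof.
  intros x Hx.
  assert (Hbound := Rabs_LK_sub_le mu n f x hmu ltac:(lia) hf Hx).
  destruct (cont01_bounded _ (cont01_f_mu mu f hmu hf)) as [M HM].
  assert (Hsqrt : 0 < sqrt (INR (n + 1))) by (apply sqrt_lt_R0, lt_0_INR; lia).
  assert (Hw : 0 <= omega (f_mu mu f) (1 / sqrt (INR (n + 1))))
    by (apply (omega_ge0 _ M HM), Rlt_le, Rdiv_lt_0_compat; lra).
  assert (Hln : 0 < ln (2 + mu)) by (rewrite <- ln_1; apply ln_increasing; lra).
  assert (Hsqrt2 : 1 <= sqrt 2) by (rewrite <- sqrt_1; apply sqrt_le_1_alt; lra).
  assert (0 <= 1 / (2 * sqrt (INR (n + 1)))) by (apply Rlt_le, Rdiv_lt_0_compat; lra).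
  assert (0 <= omega (f_mu mu f) (1 / sqrt (INR (n + 1))) * ln (2 + mu)
               * (1 / (2 * sqrt (INR (n + 1))) + sqrt 2 - 1 / 2))
    by (repeat apply Rmult_le_pos; lra).
  lra.
Qed.
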